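(* Let $k$ be a positive integer. Every tournament with $n$ vertices and cutwidth at most $k$ has at most $A\cdot\exp\bigl(2C\sqrt{k(1+\ln 2k)}\bigr)\cdot(n+1)$ $k$-cuts, where $C=\pi\sqrt{2/3}$ and $A$ is a constant such that $p(m)\le\frac{A}{m+1}\exp(C\sqrt{m})$ for all integers $m\ge 0$.
   Context: A tournament is a simple digraph in which for every pair of distinct vertices $v,w$ exactly one of $(v,w),(w,v)$ is an arc. The width of an ordering $(v_1,\dots,v_n)$ of $V(T)$ is $\max_{1\le t\le n-1}|E(\{v_{t+1},\dots,v_n\},\{v_1,\dots,v_t\})|$, where $E(A,B)$ is the set of arcs with tail in $A$ and head in $B$; the cutwidth of $T$ is the minimum width over all orderings. A $k$-cut of a digraph $T$ is an ordered partition $(X,Y)$ of $V(T)$ (either part may be empty) such that there are at most $k$ arcs $(u,v)\in E(T)$ with $u\in Y$ and $v\in X$. $p(m)$ denotes the number of partitions of the integer $m$; such $A$ exists by the Hardy–Ramanujan estimate. *)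

From mathcomp Require Import all_boot all_fingroup.
From Stdlib Require Import Reals.
Set Implicit Arguments. Unset Strict Implicit. Unset Printing Implicit Defensive.

Definition tournament (n : nat) (E : rel 'I_n) : Prop :=
  (forall v, ~~ E v v) /\ (forall u v, u != v -> (E u v (+) E v u) = true).

(* An ordering (v_1,...,v_n) is a permutation s, with v_{i+1} = s i.
   Number of arcs from {v_{t+1},...,v_n} to {v_1,...,v_t}. *)
Definition cut_size (n : nat) (E : rel 'I_n) (s : {perm 'I_n}) (t : nat) : nat :=
  #|[set p : 'I_n * 'I_n | (t <= p.1) && (p.2 < t) && E (s p.1) (s p.2)]|.

Definition width (n : nat) (E : rel 'I_n) (s : {perm 'I_n}) : nat :=
  \max_(t < n | 0 < t) cut_size E s t.

(* cutwidth: minimum width over all orderings (n*n bounds every width). *)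
Definition cutwidth (n : nat) (E : rel 'I_n) : nat :=
  \big[minn/n * n]_(s : {perm 'I_n}) width E s.

Definition back_arcs (n : nat) (E : rel 'I_n) (X : {set 'I_n}) : nat :=
  #|[set p : 'I_n * 'I_n | (p.1 \notin X) && (p.2 \in X) && E p.1 p.2]|.

Definition num_kcuts (n : nat) (E : rel 'I_n) (k : nat) : nat :=
  #|[set X : {set 'I_n} | back_arcs E X <= k]|.

(* partition number p(m): a partition of m is encoded by its multiplicity
   function f, where f i = number of parts equal to i+1 (parts are in 1..m,
   multiplicities are in 0..m), subject to sum_i (i+1) * f i = m. *)
Definition partition_number (m : nat) : nat :=
  #|[set f : {ffun 'I_m -> 'I_m.+1} | \sum_(i < m) i.+1 * f i == m]|.

Definition Cconst : R := (PI * sqrt (2 / 3))%R.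

From mathcomp Require Import all_boot all_fingroup.
From Stdlib Require Import Reals Lra Lia.
From mathcomp Require Import ssrnat zify.
Set Implicit Arguments. Unset Strict Implicit. Unset Printing Implicit Defensive.

(* Fix an ordering s of width at most k and record a k-cut (X, Y) as the
   0/1-word whose ones are the positions i with s i in X.  For a position c,
   a pair (zero before c, one at or after c) is either an arc from Y to X
   (at most k of them) or an arc going backwards across the cut at c (at
   most k of them), so  #zeros before c * #ones from c <= 2k: the word is
   2k-balanced.  A K-balanced word has at most  N = sum_(v < K) K/(v+1)
   inversions, and N <= 2k (1 + ln 2k) for K = 2k.  A word is determined by
   its number of ones and the multiset of the numbers of zeros preceding
   its ones; the nonzero part of this multiset is a partition of the
   number of inversions.  Hence there are at most (n+1) sum_(m <= N) p(m)
   k-cuts.  Finally the hypothesis on p gives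
   sum_(m <= N) p(m) <= (N+1) A e^(C sqrt N) <= A e^(C sqrt (2N)),
   using 1 + x^2 <= e^x and C (sqrt 2 - 1) >= 1. *)

Section Orderings.
Variables (n : nat) (E : rel 'I_n).

(* A cut has at most n^2 arcs, so n * n is a harmless initial value in the
   minimum defining the cutwidth. *)
Lemma width_le_sq (s : {perm 'I_n}) : width E s <= n * n.
Proof.
apply/bigmax_leqP => t _.
by rewrite /cut_size (leq_trans (max_card _)) // card_prod card_ord.
Qed.

Lemma cut_size_trivial (s : {perm 'I_n}) t : (t == 0) || (n <= t) ->
  cut_size E s t = 0.
Proof.
move=> ht; apply/eqP; rewrite cards_eq0; apply/eqP/setP => -[a b].
rewrite !inE /=; case/orP: ht => [/eqP -> | hnt]; first by rewrite ltn0 andbF.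
by rewrite leqNgt (leq_trans (ltn_ord a) hnt).
Qed.

Lemma cutwidth_ordering k : cutwidth E <= k ->
  exists s : {perm 'I_n}, forall t, cut_size E s t <= k.
Proof.
move=> hk.
have [s hs] : exists s : {perm 'I_n}, width E s <= cutwidth E.
  apply: (big_ind (fun x => exists s : {perm 'I_n}, width E s <= x)).
  - by exists 1%g; apply: width_le_sq.
  - by move=> x y [s1 h1] [s2 h2]; rewrite /minn; case: ltnP;
      [exists s1 | exists s2]; lia.
  - by move=> s _; exists s.
exists s => t; have [ht | ht] := boolP ((t == 0) || (n <= t)).
  by rewrite cut_size_trivial.
have tn : t < n by move: ht; rewrite negb_or -ltnNge => /andP [].
have t0 : 0 < t by move: ht; rewrite negb_or lt0n => /andP [].
apply: leq_trans hk; apply: leq_trans hs.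
exact: (@leq_bigmax_cond _ _ (fun t : 'I_n => cut_size E s t) (Ordinal tn)).
Qed.

End Orderings.

(* A set Q of positions in 'I_n is read as the 0/1-word whose ones are the
   elements of Q. *)
Definition zeros_before n (Q : {set 'I_n}) (c : nat) : nat :=
  #|[set i : 'I_n | (i < c) && (i \notin Q)]|.

Definition ones_from n (Q : {set 'I_n}) (c : nat) : nat :=
  #|[set i : 'I_n | (c <= i) && (i \in Q)]|.

Definition balanced n (K : nat) (Q : {set 'I_n}) : bool :=
  [forall c : 'I_n, zeros_before Q c * ones_from Q c <= K].

Definition inversions n (Q : {set 'I_n}) : nat :=
  \sum_(q in Q) zeros_before Q q.

Definition cut_word n (s : {perm 'I_n}) (X : {set 'I_n}) : {set 'I_n} :=
  [set i | s i \in X].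

Section CutWords.
Variables (n : nat) (E : rel 'I_n) (s : {perm 'I_n}).

Lemma forward_pairs_le (X L R : {set 'I_n}) :
  (forall a, a \in L -> s a \notin X) -> (forall b, b \in R -> s b \in X) ->
  #|setX L R :&: [set p | E (s p.1) (s p.2)]| <= back_arcs E X.
Proof.
move=> hL hR.
have inj : injective (fun p : 'I_n * 'I_n => (s p.1, s p.2)).
  by move=> [a b] [a' b'] /= [/perm_inj -> /perm_inj ->].
rewrite -(card_imset _ inj); apply: subset_leq_card; apply/subsetP => q.
case/imsetP=> -[a b] /setIP [/setXP [ha hb] he] ->.
by move: he; rewrite !inE /= hL // hR.
Qed.

(* In a tournament, pairs (a, b) with a < c <= b and no arc s a -> s b
   carry an arc s b -> s a crossing the cut of s at c. *)
Lemma backward_pairs_le c (L R : {set 'I_n}) : tournament E ->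
  (forall a, a \in L -> a < c) -> (forall b, b \in R -> c <= b) ->
  #|setX L R :\: [set p | E (s p.1) (s p.2)]| <= cut_size E s c.
Proof.
move=> [_ hT] hL hR.
have inj : injective (fun p : 'I_n * 'I_n => (p.2, p.1)).
  by move=> [a b] [a' b'] /= [-> ->].
rewrite -(card_imset _ inj); apply: subset_leq_card; apply/subsetP => q.
case/imsetP=> -[a b] /setDP [/setXP [ha hb] he] ->.
have ac := hL a ha; have cb := hR b hb.
have neq : s a != s b by apply/eqP => /perm_inj eab; move: ac cb; rewrite eab; lia.
by move: he (hT _ _ neq); rewrite !inE /= cb ac => /negbTE ->.
Qed.

Lemma cut_word_balanced k (X : {set 'I_n}) : tournament E ->
  (forall t, cut_size E s t <= k) -> back_arcs E X <= k ->
  balanced (k + k) (cut_word s X).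
Proof.
move=> hT hs hX; apply/forallP => c.
rewrite /zeros_before /ones_from -cardsX.
rewrite -(cardsID [set p : 'I_n * 'I_n | E (s p.1) (s p.2)]).
apply: leq_add.
- by apply: leq_trans hX; apply: forward_pairs_le => i; rewrite !inE => /andP [].
- apply: leq_trans (hs c); apply: backward_pairs_le => // i.
  + by rewrite inE => /andP [].
  + by rewrite inE => /andP [].
Qed.

Lemma kcuts_le_balanced k : tournament E ->
  (forall t, cut_size E s t <= k) ->
  num_kcuts E k <= #|[set Q : {set 'I_n} | balanced (k + k) Q]|.
Proof.
move=> hT hs.
have inj : injective (cut_word s).
  move=> X1 X2 /setP he; apply/setP => y.
  by move: (he ((s^-1)%g y)); rewrite !inE permKV.
rewrite /num_kcuts -(card_imset _ inj); apply: subset_leq_card.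
apply/subsetP => Q /imsetP [X]; rewrite inE => hX ->.
by rewrite inE cut_word_balanced.
Qed.

End CutWords.

Section Inversions.
Variable n : nat.
Implicit Types Q : {set 'I_n}.

Lemma sum_ord_lt a : \sum_(v < n) (v < a) = minn a n.
Proof.
elim: n => [|m IH]; first by rewrite big_ord0; lia.
by rewrite big_ord_recr /= IH; case: ltnP => h; lia.
Qed.

Lemma card_ord_lt a : #|[set v : 'I_n | v < a]| = minn a n.
Proof.
rewrite -sum_ord_lt -sum1_card big_mkcond /=.
by apply: eq_bigr => i _; rewrite inE; case: (i < a).
Qed.

Lemma zeros_before_le Q c : zeros_before Q c <= n.
Proof. by rewrite /zeros_before (leq_trans (max_card _)) // card_ord. Qed.

(* Counting inversions by the threshold v: the ones preceded by more than v
   zeros all lie at or after the first of them, q0, so there are at most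
   ones_from Q q0 of them, and (v+1) * ones_from Q q0 <= K by balance at q0. *)
Lemma balanced_inversions_le K Q : balanced K Q ->
  inversions Q <= \sum_(v < n) K %/ v.+1.
Proof.
move=> hQ.
have -> : inversions Q = \sum_(q in Q) \sum_(v < n) (v < zeros_before Q q).
  apply: eq_bigr => q _; rewrite sum_ord_lt.
  exact/esym/minn_idPl/zeros_before_le.
rewrite exchange_big /=; apply: leq_sum => v _.
set T := [set q in Q | v < zeros_before Q q].
have -> : \sum_(q in Q) (v < zeros_before Q q) = #|T|.
  rewrite -sum1_card big_mkcond [in RHS]big_mkcond /=; apply: eq_bigr => q _.
  by rewrite !inE; case: (q \in Q); case: (v < zeros_before Q q).
have [T0 | [q1 hq1]] := set_0Vmem T; first by rewrite T0 cards0.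
case: (arg_minnP (fun q : 'I_n => nat_of_ord q) hq1) => q0 hq0 hmin.
have : q0 \in T := hq0; rewrite /T inE => /andP [q0Q vZ].
rewrite leq_divRL //; apply: leq_trans (forallP hQ q0).
rewrite mulnC; apply: leq_mul => //.
apply: subset_leq_card; apply/subsetP => q hq.
by move: (hmin q hq) (hq); rewrite !inE => -> /andP [-> _].
Qed.

(* Terms with v >= K vanish, so the bound only depends on K. *)
Lemma sum_div_trunc K : \sum_(v < n) K %/ v.+1 <= \sum_(v < K) K %/ v.+1.
Proof.
rewrite -!(big_mkord xpredT (fun v => K %/ v.+1)).
have [nK | Kn] := leqP n K.
  by rewrite (@big_cat_nat _ _ _ n 0 K) //= leq_addr.
rewrite (@big_cat_nat _ _ _ K 0 n) //= ?(ltnW Kn) //.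
rewrite [X in _ + X](_ : _ = 0) ?addn0 //.
rewrite big_nat_cond big1 // => v /andP [/andP [hv _] _].
by rewrite divn_small // ltnS.
Qed.

End Inversions.

Section Profiles.
Variable n : nat.
Implicit Types Q : {set 'I_n}.

Definition level_count Q j : nat := #|[set q in Q | zeros_before Q q == j]|.
Definition ones_above Q v : nat := #|[set q in Q | v < zeros_before Q q]|.

Lemma zeros_before_le_inversions Q q : q \in Q ->
  zeros_before Q q <= inversions Q.
Proof. by move=> hq; rewrite /inversions (bigD1 q) //= leq_addr. Qed.

Lemma sum_by_level Q m (P : pred nat) (F : nat -> nat) : inversions Q = m ->
  \sum_(q in Q | P (zeros_before Q q)) F (zeros_before Q q) =
  \sum_(j < m.+1 | P j) F j * level_count Q j.
Proof.
move=> hm.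
have hle q : q \in Q -> zeros_before Q q < m.+1.
  by move=> hq; rewrite ltnS -hm zeros_before_le_inversions.
rewrite (partition_big (fun q : 'I_n => inord (zeros_before Q q) : 'I_m.+1)
                       (fun j : 'I_m.+1 => P j)) /=; last first.
  by move=> q /andP [hq hp]; rewrite inordK ?hle.
apply: eq_bigr => j hj.
rewrite (eq_bigr (fun _ => F j)); last first.
  by move=> q /andP [/andP [hq _] /eqP <-]; rewrite inordK ?hle.
rewrite (eq_bigl (mem [set q in Q | zeros_before Q q == j])); last first.
  move=> q; rewrite /= !inE; case hq: (q \in Q) => //=.
  apply/andP/eqP => [[_ /eqP <-] | hz]; first by rewrite inordK ?hle.
  split; first by rewrite hz.
  by apply/eqP/val_inj; rewrite /= inordK ?hle // hz.
by rewrite sum_nat_const mulnC.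
Qed.

Lemma inversions_by_level Q m : inversions Q = m ->
  m = \sum_(j < m.+1) j * level_count Q j.
Proof.
move=> hm; rewrite -(sum_by_level xpredT (fun x => x) hm) -{1}hm.
by apply: eq_bigl => q /=; rewrite andbT.
Qed.

Lemma ones_above_by_level Q m v : inversions Q = m ->
  ones_above Q v = \sum_(j < m.+1 | v < j) level_count Q j.
Proof.
move=> hm; rewrite (eq_bigr (fun j : 'I_m.+1 => 1 * level_count Q j)); last first.
  by move=> j _; rewrite mul1n.
rewrite -(sum_by_level (fun j => v < j) (fun _ => 1) hm) sum1_card.
by apply: eq_card => q; rewrite !inE.
Qed.

(* The levels 1..m of a word with m inversions, as the multiplicity
   function of a partition of m. *)
Definition partition_code m Q : {ffun 'I_m -> 'I_m.+1} :=
  [ffun i : 'I_m => inord (level_count Q i.+1)].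

(* Levels j >= 1 of a word with m inversions occur at most m times, so the
   code is well defined and is the multiplicity function of a partition. *)
Lemma level_count_le Q m (i : 'I_m) : inversions Q = m ->
  level_count Q i.+1 <= m.
Proof.
move=> hm; rewrite {2}(inversions_by_level hm) (bigD1 (inord i.+1)) //=.
by rewrite inordK ?ltnS // (leq_trans _ (leq_addr _ _)) // leq_pmull.
Qed.

Lemma partition_code_val Q m (i : 'I_m) : inversions Q = m ->
  partition_code m Q i = level_count Q i.+1 :> nat.
Proof. by move=> hm; rewrite ffunE inordK // ltnS level_count_le. Qed.

Lemma partition_code_valid Q m : inversions Q = m ->
  partition_code m Q \in
    [set f : {ffun 'I_m -> 'I_m.+1} | \sum_(i < m) i.+1 * f i == m].
Proof.
move=> hm; rewrite inE; apply/eqP.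
transitivity (\sum_(j < m.+1) j * level_count Q j); last first.
  by rewrite -inversions_by_level.
rewrite big_ord_recl /= mul0n add0n.
by apply: eq_bigr => i _; rewrite partition_code_val // lift0.
Qed.

End Profiles.

Section Reconstruction.
Variable n : nat.
Implicit Types Q : {set 'I_n}.

Lemma zeros_before_mono Q a b : a <= b -> zeros_before Q a <= zeros_before Q b.
Proof.
move=> hab; apply: subset_leq_card; apply/subsetP => i; rewrite !inE.
by case/andP => h ->; rewrite (leq_trans h hab).
Qed.

Lemma zeros_before_strict Q (x q : 'I_n) : x \notin Q -> x < q ->
  zeros_before Q x < zeros_before Q q.
Proof.
move=> hx hxq; apply: proper_card; apply/properP; split.
  by apply/subsetP => i; rewrite !inE => /andP [h ->]; rewrite (ltn_trans h hxq).
by exists x; rewrite !inE ?hxq ?hx ?ltnn.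
Qed.

Lemma ones_above_zero Q (x : 'I_n) : x \notin Q ->
  ones_above Q (zeros_before Q x) = #|[set q in Q | x < q]|.
Proof.
move=> hx; apply: eq_card => q; rewrite !inE; case: (q \in Q) => //=.
apply/idP/idP => [h | ]; last exact: zeros_before_strict.
by rewrite ltnNge; apply: contraL h => /(zeros_before_mono Q); rewrite -leqNgt.
Qed.

(* A zero x is preceded by x positions, of which zeros_before Q x are zeros;
   the remaining ones of Q come after x.  Hence the position of a zero is
   determined by its number of preceding zeros, #|Q| and the profile. *)
Lemma zero_position Q (x : 'I_n) : x \notin Q ->
  x + ones_above Q (zeros_before Q x) = zeros_before Q x + #|Q|.
Proof.
move=> hx; rewrite ones_above_zero //.
have before : #|[set v : 'I_n | v < x]| = x.
  by rewrite card_ord_lt; apply/minn_idPl/ltnW.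
have e1 : [set v : 'I_n | v < x] :\: Q = [set i : 'I_n | (i < x) && (i \notin Q)].
  by apply/setP => i; rewrite !inE andbC.
have e2 : Q :\: [set v : 'I_n | v < x] = [set q in Q | x < q].
  apply/setP => q; rewrite !inE andbC; case hq: (q \in Q) => //=.
  rewrite -leqNgt leq_eqVlt; case: eqP => //= eqx.
  by move: hx; rewrite (_ : x = q) ?hq //; apply/val_inj.
have splitx := cardsID Q [set v : 'I_n | v < x].
have splitQ := cardsID [set v : 'I_n | v < x] Q.
rewrite e1 setIC in splitx; rewrite e2 in splitQ.
rewrite /zeros_before -{1}before -splitx -splitQ -!addnA; exact: addnCA.
Qed.

Lemma zeros_before_zero_lt Q (x : 'I_n) : x \notin Q ->
  zeros_before Q x < n - #|Q|.
Proof.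
move=> hx.
have : #|Q| + #|~: Q| = n by rewrite cardsC card_ord.
have : zeros_before Q x < #|~: Q|.
  apply: proper_card; apply/properP; split.
    by apply/subsetP => i; rewrite !inE => /andP [].
  by exists x; rewrite !inE ?ltnn ?hx.
lia.
Qed.

(* The positions that zero_position allows for the zeros of a word with t
   ones and ones_above function G; there are at most n - t of them. *)
Definition zero_candidates (t : nat) (G : nat -> nat) : {set 'I_n} :=
  [set x : 'I_n | [exists v : 'I_(n - t), x + G v == v + t]].

Lemma card_zero_candidates t G : #|zero_candidates t G| <= n - t.
Proof.
case: (posnP n) => [n0 | npos].
  by rewrite (leq_trans (max_card _)) // card_ord n0.
pose x0 : 'I_n := Ordinal npos.
apply: (@leq_trans #|[set insubd x0 (v + t - G v) | v : 'I_(n - t)]|); last first.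
  by rewrite (leq_trans (leq_imset_card _ _)) // card_ord.
apply: subset_leq_card; apply/subsetP => x; rewrite inE => /existsP [v /eqP hv].
apply/imsetP; exists v => //; apply/val_inj; rewrite val_insubd.
have -> : v + t - G v = x by lia.
by rewrite ltn_ord.
Qed.

(* The zeros of Q are exactly the candidates: they are candidates, and
   there are as many zeros as the candidates can possibly be. *)
Lemma zeros_determined Q : ~: Q = zero_candidates #|Q| (ones_above Q).
Proof.
apply/eqP; rewrite eqEcard; apply/andP; split.
  apply/subsetP => x; rewrite !inE => hx; apply/existsP.
  by exists (Ordinal (zeros_before_zero_lt hx)); apply/eqP/zero_position.
rewrite (leq_trans (card_zero_candidates _ _)) //.
have : #|Q| + #|~: Q| = n by rewrite cardsC card_ord.
lia.
Qed.

Lemma partition_code_inj m Q1 Q2 : #|Q1| = #|Q2| ->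
  inversions Q1 = m -> inversions Q2 = m ->
  partition_code m Q1 = partition_code m Q2 -> Q1 = Q2.
Proof.
move=> ht h1 h2 he.
have eG : ones_above Q1 =1 ones_above Q2.
  move=> v; rewrite (ones_above_by_level v h1) (ones_above_by_level v h2).
  rewrite big_mkcond [RHS]big_mkcond !big_ord_recl /= !add0n.
  apply: eq_bigr => i _; rewrite /bump add1n.
  by rewrite -(partition_code_val _ h1) -(partition_code_val _ h2) he.
apply: setC_inj; rewrite !zeros_determined ht.
by apply/setP => x; rewrite !inE; apply: eq_existsb => v; rewrite eG.
Qed.

Lemma card_fixed_size_inversions (S : {set {set 'I_n}}) t m :
  (forall Q, Q \in S -> #|Q| = t /\ inversions Q = m) ->
  #|S| <= partition_number m.
Proof.
move=> hS; rewrite -(card_in_imset (f := partition_code m)); last first.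
  move=> Q1 Q2 /hS [t1 i1] /hS [t2 i2]; apply: partition_code_inj => //.
  by rewrite t1 t2.
apply: subset_leq_card; apply/subsetP => f /imsetP [Q /hS [_ hi] ->].
exact: partition_code_valid.
Qed.

End Reconstruction.

(* Balanced words, grouped by number of ones and number of inversions. *)
Lemma card_balanced n K :
  #|[set Q : {set 'I_n} | balanced K Q]| <=
    n.+1 * \sum_(m < (\sum_(v < K) K %/ v.+1).+1) partition_number m.
Proof.
set N := \sum_(v < K) K %/ v.+1.
have hinv (Q : {set 'I_n}) : balanced K Q -> inversions Q <= N.
  by move=> hQ; apply: leq_trans (balanced_inversions_le hQ) (sum_div_trunc _ _).
have hcard (Q : {set 'I_n}) : #|Q| <= n.
  by rewrite (leq_trans (max_card _)) // card_ord.
rewrite -sum1_card (partition_big (fun Q : {set 'I_n} =>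
  (inord #|Q|, inord (inversions Q)) : 'I_n.+1 * 'I_N.+1) xpredT) //=.
apply: (@leq_trans (\sum_(j : 'I_n.+1 * 'I_N.+1) partition_number j.2)).
  apply: leq_sum => -[t m] _; rewrite sum1dep_card -cardsE.
  apply: (card_fixed_size_inversions (t := t)) => Q.
  rewrite !inE => /andP [hQ /eqP [ht hm]].
  by rewrite -ht -hm !inordK ?ltnS ?hinv.
by rewrite -(pair_bigA _ (fun _ (m : 'I_N.+1) => partition_number m)) /=
  sum_nat_const card_ord.
Qed.

Local Open Scope R_scope.

Lemma INR_leq (a b : nat) : (a <= b)%N -> INR a <= INR b.
Proof. by move/leP; apply: le_INR. Qed.

Lemma INR_addn (a b : nat) : INR (a + b)%N = INR a + INR b.
Proof. by rewrite -plusE plus_INR. Qed.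

Lemma INR_muln (a b : nat) : INR (a * b)%N = INR a * INR b.
Proof. by rewrite -multE mult_INR. Qed.

Lemma INR_sum_le (f : nat -> nat) (b : R) M :
  (forall m, (m < M)%N -> INR (f m) <= b) -> INR (\sum_(m < M) f m) <= INR M * b.
Proof.
elim: M => [|M IH] hf; first by rewrite big_ord0 /=; lra.
rewrite big_ord_recr INR_addn S_INR.
rewrite Rmult_plus_distr_r Rmult_1_l; apply: Rplus_le_compat.
  by apply: IH => m hm; apply: hf; apply: ltnW.
exact: hf.
Qed.

Lemma exp_le_exp x y : x <= y -> exp x <= exp y.
Proof. by case=> [h | ->]; [left; apply: exp_increasing | right]. Qed.

Lemma exp_mul_nat y m : exp (INR m * y) = exp y ^ m.
Proof.
elim: m => [|m IH]; first by rewrite Rmult_0_l exp_0.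
by rewrite S_INR Rmult_plus_distr_r Rmult_1_l exp_plus IH /=; ring.
Qed.

(* (1 + x/m)^m <= e^x, from 1 + y <= e^y applied to y = x/m. *)
Lemma pow_le_exp x m : (0 < m)%N -> 0 <= 1 + x / INR m ->
  (1 + x / INR m) ^ m <= exp x.
Proof.
move=> hm h.
have hm0 : INR m <> 0 by apply: not_0_INR; lia.
rewrite -{2}(_ : INR m * (x / INR m) = x); last by field.
by rewrite exp_mul_nat; apply: pow_incr; split => //; apply: exp_ineq1_le.
Qed.

Lemma one_plus_sq_le_exp x : 0 <= x -> 1 + x * x <= exp x.
Proof.
move=> hx; apply: Rle_trans (pow_le_exp (m := 8) _ _) => //; last first.
  by rewrite /=; lra.
rewrite (_ : INR 8 = 8); last by rewrite /=; ring.
set y := x / 8; rewrite (_ : x = 8 * y); last by rewrite /y; field.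
have hy : 0 <= y by rewrite /y; lra.
have : 0 <= y * Rsqr (y - 9 / 28) by apply: Rmult_le_pos => //; apply: Rle_0_sqr.
have : 0 <= y ^ 4 by apply: pow_le.
have : 0 <= y ^ 5 by apply: pow_le.
have : 0 <= y ^ 6 by apply: pow_le.
have : 0 <= y ^ 7 by apply: pow_le.
have : 0 <= y ^ 8 by apply: pow_le.
rewrite /Rsqr /=; nra.
Qed.

Fixpoint harmonic (j : nat) : R :=
  match j with 0%N => 0 | j'.+1 => harmonic j' + / INR j'.+1 end.

(* H_j <= 1 + ln j, from 1/(a+1) <= ln (a+1) - ln a. *)
Lemma harmonic_le_ln j : (1 <= j)%N -> harmonic j <= 1 + ln (INR j).
Proof.
elim: j => [|[|j] IH] // _; first by rewrite /= ln_1; lra.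
have {}IH := IH isT; change (harmonic j.+2) with (harmonic j.+1 + / INR j.+2).
set a := INR j.+1 in IH *; set b := INR j.+2.
have ha : 0 < a by apply: lt_0_INR; lia.
have hb : b = a + 1 by rewrite /b S_INR.
have step : / b <= ln b - ln a.
  have := exp_ineq1_le (ln (a / b)).
  rewrite exp_ln; last by apply: Rdiv_lt_0_compat; lra.
  have hb' : 0 < / b by apply: Rinv_0_lt_compat; lra.
  rewrite /Rdiv ln_mult ?ln_Rinv; try lra.
  have -> : a * / b = 1 - / b by rewrite hb; field; lra.
  lra.
lra.
Qed.

Lemma sum_div_le_harmonic (K J : nat) :
  INR (\sum_(v < J) K %/ v.+1) <= INR K * harmonic J.
Proof.
elim: J => [|J IH]; first by rewrite big_ord0 /=; lra.
rewrite big_ord_recr INR_addn.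
change (harmonic J.+1) with (harmonic J + / INR J.+1); rewrite Rmult_plus_distr_l.
apply: Rplus_le_compat => //.
have hJ : 0 < INR J.+1 by apply: lt_0_INR; lia.
apply: (Rmult_le_reg_r (INR J.+1)) => //.
rewrite Rmult_assoc Rinv_l ?Rmult_1_r; last by apply: Rgt_not_eq.
by rewrite -INR_muln; apply: INR_leq; apply: leq_divM.
Qed.

Lemma balanced_bound_le k : (0 < k)%N ->
  INR (\sum_(v < k + k) (k + k) %/ v.+1) <= 2 * INR k * (1 + ln (2 * INR k)).
Proof.
move=> hk.
have e2k : INR (k + k) = 2 * INR k by rewrite INR_addn; ring.
apply: Rle_trans (sum_div_le_harmonic _ _) _; rewrite e2k.
apply: Rmult_le_compat_l; first by have := pos_INR k; lra.
by rewrite -e2k; apply: harmonic_le_ln; lia.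
Qed.

Lemma Cconst_ge0 : 0 <= Cconst.
Proof. by apply: Rmult_le_pos; [left; apply: PI_RGT_0 | apply: sqrt_pos]. Qed.

(* Numerically C (sqrt 2 - 1) = 1.06...; this is what makes the factor
   N + 1 absorbable. *)
Lemma Cconst_gap : 1 <= Cconst * (sqrt 2 - 1).
Proof.
have hpi : 3 <= PI by have := PI2_3_2; lra.
have h1 : 0.8164 <= sqrt (2 / 3).
  by rewrite -(sqrt_square 0.8164); [apply: sqrt_le_1_alt | ]; lra.
have h2 : 1.4142 <= sqrt 2.
  by rewrite -(sqrt_square 1.4142); [apply: sqrt_le_1_alt | ]; lra.
have : 3 * 0.8164 <= PI * sqrt (2 / 3) by apply: Rmult_le_compat; lra.
rewrite /Cconst => hC.
have h3 : 0.4142 <= sqrt 2 - 1 by lra.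
apply: Rle_trans (Rmult_le_compat _ _ _ _ _ _ hC h3); lra.
Qed.

(* (N + 1) e^(C sqrt N) <= e^(C sqrt (2N)): with u = sqrt N the gap
   C (sqrt 2 - 1) u >= u pays for the factor 1 + u^2. *)
Lemma linear_factor_absorbed (N : nat) :
  INR N.+1 * exp (Cconst * sqrt (INR N)) <= exp (Cconst * sqrt (2 * INR N)).
Proof.
have hN := pos_INR N; have hC := Cconst_ge0.
set u := sqrt (INR N).
have hu : 0 <= u by apply: sqrt_pos.
have huu : u * u = INR N by apply: sqrt_sqrt.
set x := Cconst * (sqrt 2 - 1) * u.
have hxu : u <= x.
  by rewrite /x -{1}(Rmult_1_l u); apply: Rmult_le_compat_r => //; apply: Cconst_gap.
have hex : 1 + u * u <= exp x.
  apply: Rle_trans (one_plus_sq_le_exp (Rle_trans _ _ _ hu hxu)).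
  by apply: Rplus_le_compat_l; apply: Rmult_le_compat.
have -> : Cconst * sqrt (2 * INR N) = x + Cconst * u.
  by rewrite sqrt_mult; [rewrite /x -/u; ring | lra | lra].
rewrite exp_plus S_INR -huu; apply: Rmult_le_compat_r; first by left; apply: exp_pos.
lra.
Qed.

Lemma partition_sum_bound (A : R)
  (hA : forall m : nat,
      INR (partition_number m) <= A / INR (m + 1) * exp (Cconst * sqrt (INR m)))
  (k N : nat) : (0 < k)%N -> INR N <= 2 * INR k * (1 + ln (2 * INR k)) ->
  INR (\sum_(m < N.+1) partition_number m)
    <= A * exp (2 * Cconst * sqrt (INR k * (1 + ln (2 * INR k)))).
Proof.
move=> hk hN.
have hC := Cconst_ge0.
have hA0 : 0 <= A.
  have := hA 0%N; rewrite /= sqrt_0 Rmult_0_r exp_0 Rmult_1_r /Rdiv Rinv_1 Rmult_1_r.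
  suff : 1 <= INR (partition_number 0) by lra.
  apply: (INR_leq (a := 1)); apply/card_gt0P.
  by exists [ffun i : 'I_0 => ord0]; rewrite inE big_ord0.
have hterm m : (m < N.+1)%N ->
    INR (partition_number m) <= A * exp (Cconst * sqrt (INR N)).
  move=> hm; apply: Rle_trans (hA m) _.
  have hm1 : 1 <= INR (m + 1) by rewrite INR_addn /=; have := pos_INR m; lra.
  have hdiv0 : 0 <= A / INR (m + 1).
    by apply: Rmult_le_pos => //; left; apply: Rinv_0_lt_compat; lra.
  have hdiv : A / INR (m + 1) <= A.
    rewrite /Rdiv -{2}(Rmult_1_r A); apply: Rmult_le_compat_l => //.
    by rewrite -Rinv_1; apply: Rinv_le_contravar; lra.
  apply: Rmult_le_compat => //; first by left; apply: exp_pos.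
  apply: exp_le_exp; apply: Rmult_le_compat_l => //.
  by apply: sqrt_le_1_alt; apply: INR_leq; rewrite -ltnS.
apply: Rle_trans (INR_sum_le hterm) _.
rewrite Rmult_comm Rmult_assoc; apply: Rmult_le_compat_l => //.
rewrite Rmult_comm; apply: Rle_trans (linear_factor_absorbed N) _.
apply: exp_le_exp; rewrite [2 * Cconst]Rmult_comm Rmult_assoc.
apply: Rmult_le_compat_l => //.
have hk1 : 1 <= INR k by apply: (INR_leq hk).
have hl : 0 <= ln (2 * INR k) by rewrite -ln_1; left; apply: ln_increasing; lra.
have hy : 0 <= INR k * (1 + ln (2 * INR k)) by apply: Rmult_le_pos; lra.
rewrite -{2}(sqrt_square 2); last by lra.
rewrite -sqrt_mult; [|lra|lra].
by apply: sqrt_le_1_alt; lra.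
Qed.

Close Scope R_scope.
Unset Implicit Arguments.

Theorem mainTheorem12 (A : R)
  (hA : forall m : nat,
      (INR (partition_number m) <= A / INR (m + 1) * exp (Cconst * sqrt (INR m)))%R)
  (k n : nat) (E : rel 'I_n) :
  (0 < k)%N -> tournament E -> (cutwidth E <= k)%N ->
  (INR (num_kcuts E k)
     <= A * exp (2 * Cconst * sqrt (INR k * (1 + ln (2 * INR k)))) * INR (n + 1))%R.
Proof.
move=> hk hT hcw.
have [s hs] := cutwidth_ordering hcw.
set N := \sum_(v < k + k) (k + k) %/ v.+1.
have hcount : num_kcuts E k <= n.+1 * \sum_(m < N.+1) partition_number m.
  exact: leq_trans (kcuts_le_balanced hT hs) (card_balanced n (k + k)).
have hsum := partition_sum_bound hA (N := N) hk (balanced_bound_le hk).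
apply: (Rle_trans _ _ _ (INR_leq hcount)).
rewrite INR_muln addn1 Rmult_comm.
by apply: Rmult_le_compat_r => //; apply: pos_INR.
Qed.
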